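(* Let $n\ge 1$, $m\ge 2$, $N=\{1,\dots,n\}$, $M=\{1,\dots,m\}$, $R\in\mathbb{R}$, $b\in\mathbb{R}^n$, and bounds $l,u\in\mathbb{R}^{n\times m}$ with $l_{i,1}\le u_{i,1}<l_{i,2}\le u_{i,2}<\dots<l_{i,m}\le u_{i,m}$ for every $i\in N$. Let $K=(K_1,\dots,K_{m-1})\in\mathbb{Z}^{m-1}$ with $0\le K_1\le\dots\le K_{m-1}<n$, and let $K^+=(K_1,\dots,K_{m-2},K_{m-1}+1)$. For such a partition vector $K$ (with the conventions $K_0=0$, $K_m=n$) let $j^K(i)$ be the unique $j\in M$ with $K_{j-1}<i\le K_j$, and for $\lambda\in\mathbb{R}$ define \[ x_i(K,\lambda)=\begin{cases} l_{i,j^K(i)} & \text{if } \lambda\le l_{i,j^K(i)}+b_i,\\ \lambda-b_i & \text{if } l_{i,j^K(i)}+b_i\le\lambda\le u_{i,j^K(i)}+b_i,\\ u_{i,j^K(i)} & \text{if } \lambda\ge u_{i,j^K(i)}+b_i,\end{cases}\qquad z(K,\lambda)=\sum_{i\in N}x_i(K,\lambda). \] Suppose $\lambda^K,\lambda^{K^+}\in\mathbb{R}$ satisfy $z(K,\lambda^K)=R$ and $z(K^+,\lambda^{K^+})=R$. Then $\lambda^{K^+}>\lambda^K$.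
   Context: $x(K,\lambda)$ is the optimal solution of the Lagrangian relaxation of the quadratic problem $Q(K)$: $\min\sum_i\frac12(x_i+b_i)^2$ s.t. $\sum_i x_i=R$, $x_i\in[l_{i,j^K(i)},u_{i,j^K(i)}]$; a value $\lambda^K$ with $z(K,\lambda^K)=R$ is an optimal Lagrange multiplier of $Q(K)$, which exists when $Q(K)$ is feasible. *)

From mathcomp Require Import all_boot all_order all_algebra.
From mathcomp Require Import reals.
Set Implicit Arguments. Unset Strict Implicit. Unset Printing Implicit Defensive.
Import Order.TTheory GRing.Theory Num.Theory.
Local Open Scope ring_scope.

(* Indices are 1-based naturals as in the paper: i in 1..n, j in 1..m.
   A partition vector K is a function nat -> nat, with K j meaningful for
   j in 1..m-1.  Extended with the conventions K_0 = 0, K_m = n. *)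
Definition Kext (n m : nat) (K : nat -> nat) (j : nat) : nat :=
  if j == 0%N then 0%N else if (j < m)%N then K j else n.

(* j^K(i): the (unique, under the monotonicity hypotheses) j in M with
   K_{j-1} < i <= K_j.  Encoded with j' : 'I_m standing for j = j'+1. *)
Definition jK (n m : nat) (K : nat -> nat) (i : nat) : nat :=
  match [pick j : 'I_m | (Kext n m K j < i <= Kext n m K j.+1)%N] with
  | Some j => j.+1
  | None => 0%N
  end.

Definition Kplus (m : nat) (K : nat -> nat) (j : nat) : nat :=
  if j == m.-1 then (K j).+1 else K j.

Section XZ.
Variable R : realType.

Definition xK (n m : nat) (l u : nat -> nat -> R) (b : nat -> R)
    (K : nat -> nat) (lam : R) (i : nat) : R :=
  let j := jK n m K i in
  if lam <= l i j + b i then l i j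
  else if lam <= u i j + b i then lam - b i
  else u i j.

Definition zK (n m : nat) (l u : nat -> nat -> R) (b : nat -> R)
    (K : nat -> nat) (lam : R) : R :=
  \sum_(1 <= i < n.+1) xK n m l u b K lam i.
End XZ.

From mathcomp Require Import all_boot all_order all_algebra.
From mathcomp Require Import reals.
From mathcomp Require Import lra zify.
Import Order.TTheory GRing.Theory Num.Theory.
Local Open Scope ring_scope.

(* Passing from K to K^+ moves only the index s = K_{m-1} + 1 from the last
   segment m to segment m - 1.  Its variable is then bounded above by
   u_{s,m-1} < l_{s,m}, a lower bound for it under K, while every other
   variable is the same nondecreasing clamp of lambda under K and K^+.  Hence
   lambda^{K^+} <= lambda^K would force z(K^+, lambda^{K^+}) < z(K, lambda^K),
   contradicting that both equal R. *)

Lemma ltr_sum_nat_le_lt (R : numDomainType) (a c s : nat) (F G : nat -> R) :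
  (a <= s < c)%N ->
  (forall i, (a <= i < c)%N -> F i <= G i) -> F s < G s ->
  \sum_(a <= i < c) F i < \sum_(a <= i < c) G i.
Proof.
move=> hs leFG ltFG.
have [has sc] := andP hs.
rewrite !(big_cat_nat has (ltnW sc)) !(big_ltn sc) /=.
rewrite addrCA [X in _ < X]addrCA; apply: ltr_leD => //.
apply: lerD; apply: ler_sum_nat => i /andP[hi1 hi2]; apply: leFG; lia.
Qed.

Definition clamp {R : realFieldType} (l u b lam : R) : R :=
  if lam <= l + b then l else if lam <= u + b then lam - b else u.

Lemma clamp_ge_lo (R : realFieldType) (l u b lam : R) :
  l <= u -> l <= clamp l u b lam.
Proof.
by rewrite /clamp; case: (leP lam (l + b)) => ?; case: (leP lam (u + b)) => ? /=; lra.
Qed.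

Lemma clamp_le_hi (R : realFieldType) (l u b lam : R) :
  l <= u -> clamp l u b lam <= u.
Proof.
by rewrite /clamp; case: (leP lam (l + b)) => ?; case: (leP lam (u + b)) => ? /=; lra.
Qed.

Lemma clamp_nondecreasing (R : realFieldType) (l u b lam lam' : R) :
  l <= u -> lam <= lam' -> clamp l u b lam <= clamp l u b lam'.
Proof.
rewrite /clamp => lu le_lam.
by case: (leP lam (l + b)) => ?; case: (leP lam' (l + b)) => ?;
   case: (leP lam (u + b)) => ?; case: (leP lam' (u + b)) => ? /=; lra.
Qed.

Lemma xKE (R : realType) n m (l u : nat -> nat -> R) b K lam i :
  xK n m l u b K lam i = clamp (l i (jK n m K i)) (u i (jK n m K i)) (b i) lam.
Proof. by []. Qed.

Definition nondecreasing_upto (m : nat) (f : nat -> nat) :=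
  forall j k, (j <= k <= m)%N -> (f j <= f k)%N.

Section Partition.
Variables (n m : nat) (K : nat -> nat).

Lemma Kext_last : (0 < m)%N -> Kext n m K m = n.
Proof. by rewrite /Kext ltnn => /lt0n_neq0/negbTE->. Qed.

Lemma Kext_inner j : (0 < j < m)%N -> Kext n m K j = K j.
Proof. by rewrite /Kext => /andP[/lt0n_neq0/negbTE-> ->]. Qed.

Lemma Kext_nondecreasing :
  (forall j, (1 <= j)%N -> (j.+1 <= m.-1)%N -> (K j <= K j.+1)%N) ->
  (K m.-1 <= n)%N -> nondecreasing_upto m (Kext n m K).
Proof.
move=> Kmono Kn j k /andP[jk km].
have K_le a c : (1 <= a <= c)%N -> (c <= m.-1)%N -> (K a <= K c)%N.
  move=> /andP[a1]; elim: c => [|c IH] ac cm; first lia.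
  have [->//|ne] := eqVneq a c.+1.
  have := Kmono c; have := IH; lia.
rewrite /Kext; have [//|j0] := eqVneq j 0%N.
rewrite ifN_eq; last lia.
case: (ltnP j m) => jm; last by rewrite ltnNge (leq_trans jm jk).
case: (ltnP k m) => km'; first by apply: K_le; lia.
by apply: leq_trans Kn; apply: K_le; lia.
Qed.

Lemma jK_eq i j : nondecreasing_upto m (Kext n m K) ->
  (1 <= j <= m)%N -> (Kext n m K j.-1 < i <= Kext n m K j)%N ->
  jK n m K i = j.
Proof.
move=> Kext_mono hj hi; rewrite /jK; case: pickP => [j' /andP[lo hi']|none].
  have := ltn_ord j'.
  case: (ltngtP j'.+1 j) => [lt|gt|->//] j'm.
  - have := Kext_mono j'.+1 j.-1; lia.
  - have := Kext_mono j j'; lia.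
have j'm : (j.-1 < m)%N by lia.
by move: (none (Ordinal j'm)); rewrite /= prednK ?hi //; lia.
Qed.

Lemma jK_range i : (1 <= m)%N -> (1 <= i <= n)%N -> (1 <= jK n m K i <= m)%N.
Proof.
move=> hm hi; rewrite /jK; case: pickP => [j _|none]; first by rewrite /= ltn_ord.
have covers : exists k, (i <= Kext n m K k)%N && (k <= m)%N.
  by exists m; rewrite Kext_last // leqnn; lia.
case: (ex_minnP covers) => k /andP[ik km] kmin.
have k0 : k != 0%N by apply: contraTneq ik => ->; rewrite /Kext /=; lia.
have k'm : (k.-1 < m)%N by lia.
have := none (Ordinal k'm); rewrite /= prednK ?lt0n // ik andbT => /negbT.
rewrite -leqNgt => ik'; have := kmin k.-1; rewrite ik' /=; lia.
Qed.

Hypothesis m2 : (2 <= m)%N.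

Lemma Kext_Kplus k :
  Kext n m (Kplus m K) k = if k == m.-1 then (Kext n m K k).+1 else Kext n m K k.
Proof.
rewrite /Kext /Kplus; have [->|k0] := eqVneq k 0%N; first by rewrite ifN_eq //; lia.
case: (eqVneq k m.-1) => [->|_] //=.
by have -> : (m.-1 < m)%N by lia.
Qed.

Lemma jK_Kplus i : i != (K m.-1).+1 -> jK n m (Kplus m K) i = jK n m K i.
Proof.
move=> hi; rewrite /jK (@eq_pick _ _ (fun j : 'I_m =>
   (Kext n m K j < i <= Kext n m K j.+1)%N)) // => j /=.
have Klast : Kext n m K m.-1 = K m.-1 by apply: Kext_inner; lia.
rewrite !Kext_Kplus; case: (eqVneq (j : nat) m.-1) => [hj|hj];
  case: (eqVneq j.+1 m.-1) => [hj'|hj'] //=.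
- lia.
- by rewrite hj Klast; congr andb; lia.
- by rewrite hj' Klast; congr andb; lia.
Qed.

End Partition.

Section MovedIndex.
Variables (R : realType) (n m : nat) (b : nat -> R) (l u : nat -> nat -> R).
Variable K : nat -> nat.
Hypotheses (m2 : (2 <= m)%N)
  (lu : forall i j, (1 <= i <= n)%N -> (1 <= j <= m)%N -> l i j <= u i j)
  (ul : forall i j, (1 <= i <= n)%N -> (1 <= j < m)%N -> u i j < l i j.+1)
  (Kmono : forall j, (1 <= j)%N -> (j.+1 <= m.-1)%N -> (K j <= K j.+1)%N)
  (Kn : (K m.-1 < n)%N).

Let s := (K m.-1).+1.

Let Kext_K_last : Kext n m K m.-1 = K m.-1.
Proof. by apply: Kext_inner; lia. Qed.

Lemma jK_moved : jK n m K s = m.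
Proof.
apply: jK_eq; first by apply: Kext_nondecreasing => //; lia.
  lia.
by rewrite Kext_K_last Kext_last; lia.
Qed.

Lemma jK_Kplus_moved : jK n m (Kplus m K) s = m.-1.
Proof.
have Kplus_mono : nondecreasing_upto m (Kext n m (Kplus m K)).
  apply: Kext_nondecreasing; rewrite /Kplus ?eqxx //.
  move=> j j1 jm; rewrite ifN_eq; last lia.
  by case: ifP => _; [apply: leqW|]; apply: Kmono.
apply: jK_eq => //; first lia.
rewrite !Kext_Kplus // eqxx ifN_eq; last lia.
rewrite Kext_K_last leqnn andbT ltnS.
by rewrite -Kext_K_last; apply: Kext_nondecreasing => //; lia.
Qed.

Lemma xK_moved_lt lam lam' :
  xK n m l u b (Kplus m K) lam s < xK n m l u b K lam' s.
Proof.
have s_in : (1 <= s <= n)%N by lia.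
rewrite !xKE jK_moved jK_Kplus_moved.
apply: (@le_lt_trans _ _ (u s m.-1)); first by apply: clamp_le_hi; apply: lu; lia.
apply: (@lt_le_trans _ _ (l s m)); last by apply: clamp_ge_lo; apply: lu; lia.
by rewrite -[in l s m](prednK (_ : 0 < m)%N) 1?ul //; lia.
Qed.

Lemma xK_unmoved_le lam lam' i : (1 <= i <= n)%N -> i != s -> lam <= lam' ->
  xK n m l u b (Kplus m K) lam i <= xK n m l u b K lam' i.
Proof.
move=> i_in i_ne le_lam; rewrite !xKE jK_Kplus //.
by apply: clamp_nondecreasing => //; apply: lu => //; apply: jK_range; lia.
Qed.

Lemma zK_Kplus_lt lam lam' : lam <= lam' ->
  zK n m l u b (Kplus m K) lam < zK n m l u b K lam'.
Proof.
move=> le_lam; apply: (@ltr_sum_nat_le_lt _ _ _ s); first lia.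
  move=> i i_in; have [->|i_ne] := eqVneq i s; first exact/ltW/xK_moved_lt.
  by apply: xK_unmoved_le; lia.
exact: xK_moved_lt.
Qed.

End MovedIndex.

Theorem lemma4 (R : realType) (n m : nat) (Rhs : R) (b : nat -> R)
  (l u : nat -> nat -> R) (K : nat -> nat) (lamK lamKp : R) :
  (1 <= n)%N -> (2 <= m)%N ->
  (forall i j, (1 <= i <= n)%N -> (1 <= j <= m)%N -> l i j <= u i j) ->
  (forall i j, (1 <= i <= n)%N -> (1 <= j < m)%N -> u i j < l i j.+1) ->
  (forall j, (1 <= j)%N -> (j.+1 <= m.-1)%N -> (K j <= K j.+1)%N) ->
  (K m.-1 < n)%N ->
  zK n m l u b K lamK = Rhs ->
  zK n m l u b (Kplus m K) lamKp = Rhs ->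
  lamKp > lamK.
Proof.
move=> _ m2 lu ul Kmono Kn zK_lamK zKplus_lamKp.
rewrite ltNge; apply/negP => le_lam.
have := @zK_Kplus_lt R n m b l u K m2 lu ul Kmono Kn _ _ le_lam.
by rewrite zK_lamK zKplus_lamKp ltxx.
Qed.
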